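(* Let $X$ be a cubic vertex-transitive graph for which $1$ is a simple eigenvalue, with $\pm1$ eigenvector $\mathbf{z}$ for $1$, $V^+=\{x\mid\mathbf{z}(x)=1\}$, $V^-=\{x\mid\mathbf{z}(x)=-1\}$, where $X[V^+]$ is a disjoint union of cycles $C_1,\dots,C_m$ and $X[V^-]$ a disjoint union of cycles $D_1,\dots,D_m$, all of length $k$. Let $\Gamma\le\mathrm{Aut}(X)$ act transitively on $V(X)$, and assume (A1): the stabilizer of $C_1$ in $\Gamma$ acts regularly on the vertex set of $C_1$. Write $C_1=v_1v_2\cdots v_k$ and let $D_1=w_1w_2\cdots w_k$ be the cycle of $X[V^-]$ with $v_1w_1\in E(X)$; let $\gamma_1\in\Gamma$ satisfy $\gamma_1(v_j)=v_{j+1}$ for all $j$ (indices mod $k$) and let $\delta_1\in\Gamma$ satisfy $\delta_1(v_j)=w_j$ for all $j$ (the labelling of $D_1$ being chosen so that such $\delta_1$ exists). Then $\Gamma$ acts regularly on $V(X)$, and hence $X$ is a Cayley graph of the group generated by $\gamma_1$ and the involution $\delta_1$.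
   Context: A group acts regularly on a set if it acts transitively and only the identity fixes a point. $X[W]$ denotes the induced subgraph on $W$. Eigenvalues are those of the adjacency matrix; simple means the eigenspace is $1$-dimensional. *)

From HB Require Import structures.
From mathcomp Require Import all_boot all_order all_algebra all_fingroup all_field.
Set Implicit Arguments. Unset Strict Implicit. Unset Printing Implicit Defensive.
Import GRing.Theory Num.Theory.

Local Open Scope ring_scope.

Section Graphs.
Variable T : finType.

Definition simple_graph (e : rel T) := symmetric e /\ irreflexive e.

Definition cubic (e : rel T) := forall x : T, #|[set y | e x y]| = 3%N.

Definition is_aut (e : rel T) (g : {perm T}) := forall x y, e (g x) (g y) = e x y.

Definition vertex_transitive (e : rel T) :=
  forall x y : T, exists g : {perm T}, is_aut e g /\ g x = y.

Definition adjmx (e : rel T) : 'M[algC]_#|T| :=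
  \matrix_(i, j) (e (enum_val i) (enum_val j))%:R.

Definition vecof (z : T -> algC) : 'rV[algC]_#|T| := \row_i z (enum_val i).

(* c : 'I_k -> T is a k-cycle c_0 c_1 ... c_{k-1} which is an induced
   subgraph of X[W] (no chords). *)
Definition induced_cycle (e : rel T) (W : {set T}) (k : nat) (c : 'I_k -> T) :=
  [/\ (3 <= k)%N, injective c, (forall i, c i \in W) &
      forall i j, e (c i) (c j) = (j == ordS i) || (i == ordS j)].

Definition cycle_decomposition (e : rel T) (W : {set T}) (m k : nat)
    (C : 'I_m -> 'I_k -> T) :=
  [/\ forall a, induced_cycle e W (C a),
      forall x, x \in W -> exists a, exists i, C a i = x,
      forall a b i j, C a i = C b j -> a = b &
      forall a b i j, a != b -> ~~ e (C a i) (C b j)].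

Definition acts_regularly (G : {set {perm T}}) (S : {set T}) :=
  [transitive G, on S | 'P] /\ forall g x, g \in G -> x \in S -> g x = x -> g = 1%g.

(* X is (isomorphic to) a Cayley graph Cay(H, S): vertices are the elements
   of H, and g ~ h iff g^-1 h \in S, with S = S^-1 and 1 \notin S. *)
Definition cayley_graph_of (gT : finGroupType) (H : {set gT}) (e : rel T) :=
  exists (f : gT -> T) (S : {set gT}),
    [/\ {in H &, injective f}, f @: H = [set: T],
        [/\ S \subset H, (1%g \notin S) & [set (s^-1)%g | s in S] = S] &
        {in H &, forall g h, e (f g) (f h) = ((g^-1 * h)%g \in S)}].

End Graphs.

From HB Require Import structures.
From mathcomp Require Import all_boot all_order all_algebra all_fingroup all_field.
From mathcomp Require Import zify.
Set Implicit Arguments. Unset Strict Implicit. Unset Printing Implicit Defensive.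
Import GRing.Theory Num.Theory.

(* Since 1 is a simple eigenvalue, an automorphism g sends z to a multiple of z;
   if g fixes a vertex of V+ the multiple is 1, so g preserves V+ and therefore
   maps the component C1 of X[V+] onto itself, whence g = 1 by (A1).  Thus point
   stabilisers in Gamma are trivial.  Since X is cubic, w1 is adjacent only to
   v1 and to its two neighbours on D1 = delta1(C1); as delta1 w1 is adjacent to
   delta1 v1 = w1 and lies outside delta1(C1), delta1 w1 = v1, so delta1^2 fixes
   v1.  The neighbours of v1 are gamma1 v1, gamma1^-1 v1 and delta1 v1, so the
   orbit O of v1 under <gamma1, delta1> is closed under adjacency; z restricted
   to O is again a 1-eigenvector, and simplicity forces O = V(X).  A group
   acting regularly by automorphisms exhibits X as a Cayley graph of that group. *)

Lemma ordS_neq_ord_pred (k : nat) (i : 'I_k) : 2 < k -> ordS i != ord_pred i.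
Proof.
move=> k_gt2; apply/eqP => /(congr1 (@ordS k)); rewrite ord_predK => /(congr1 val) /=.
have i_lt_k := ltn_ord i; rewrite -[(_ %% k).+1]addn1 modnDml addn1.
case: (ltnP i.+2 k) => [i2_lt_k | k_le_i2]; first by rewrite modn_small; lia.
by rewrite -(subnK k_le_i2) modnDr modn_small; lia.
Qed.

Lemma ordS_ind (k : nat) (P : pred 'I_k) (i0 : 'I_k) :
  P i0 -> (forall i, P i -> P (ordS i)) -> forall i, P i.
Proof.
move=> Pi0 PS i; have i0_lt_k := ltn_ord i0; have i_lt_k := ltn_ord i.
have iterE n : val (iter n (@ordS k) i0) = (i0 + n) %% k.
  elim: n => [|n IH] /=; first by rewrite addn0 modn_small.
  by rewrite IH -addn1 modnDml addn1 addnS.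
have -> : i = iter (i + k - i0) (@ordS k) i0.
  by apply: val_inj; rewrite iterE (_ : i0 + _ = i + k) ?modnDr ?modn_small //; lia.
by elim: (i + k - i0) => //= n; apply: PS.
Qed.

Lemma mem_card3 (T : finType) (A : {set T}) (a b c x : T) :
  #|A| = 3 -> a \in A -> b \in A -> c \in A -> a != b -> a != c -> b != c ->
  x \in A -> [|| x == a, x == b | x == c].
Proof.
move=> A3 aA bA cA ab ac bc; suff <- : [set a; b; c] = A by rewrite !inE orbA.
have abc_sub : [set a; b; c] \subset A.
  by apply/subsetP => y; rewrite !inE -orbA => /or3P[] /eqP->.
have card_abc : #|[set a; b; c]| = 3.
  by rewrite setUC cardsU1 cards2 !inE ab negb_or eq_sym ac eq_sym bc.
by apply/eqP; rewrite eqEcard abc_sub A3 card_abc.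
Qed.

Section CycleDecompositions.
Variables (T : finType) (e : rel T).

Lemma induced_cycle_neighbors (W : {set T}) (k : nat) (c : 'I_k -> T) (i : 'I_k) (y : T) :
  cubic e -> induced_cycle e W c -> y \notin W -> e (c i) y ->
  forall x, e (c i) x -> [|| x == c (ordS i), x == c (ord_pred i) | x == y].
Proof.
move=> e_cubic [k_gt2 c_inj c_in c_adj] yNW eciy x ecix.
have cNy j : c j != y by apply: contraNneq yNW => <-.
apply: (mem_card3 (e_cubic (c i))); rewrite ?inE ?c_adj ?ord_predK ?eqxx ?orbT ?cNy //.
by rewrite (inj_eq c_inj) ordS_neq_ord_pred.
Qed.

Lemma cycle_decomposition_adj (W : {set T}) (m k : nat) (C : 'I_m -> 'I_k -> T)
    (a : 'I_m) (i : 'I_k) (y : T) :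
  cycle_decomposition e W C -> y \in W -> e (C a i) y -> exists j, y = C a j.
Proof.
case=> _ C_cover _ C_nadj yW eCy; have [b [j yE]] := C_cover y yW.
case: (eqVneq a b) => [-> | a_neq_b]; first by exists j.
by move: eCy; rewrite -yE (negbTE (C_nadj _ _ i j a_neq_b)).
Qed.

Lemma aut_imset_cycle (W : {set T}) (m k : nat) (C : 'I_m -> 'I_k -> T)
    (a : 'I_m) (i0 : 'I_k) (g : {perm T}) :
  cycle_decomposition e W C -> is_aut e g -> {in W, forall x, g x \in W} ->
  g (C a i0) \in [set C a i | i : 'I_k] ->
  g @: [set C a i | i : 'I_k] = [set C a i | i : 'I_k].
Proof.
move=> CW g_aut gW gCi0.
have gC i : g (C a i) \in [set C a j | j : 'I_k].
  move: i; apply: (ordS_ind gCi0) => i /imsetP[j _ gCiE].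
  have [/(_ a)[_ _ C_in C_adj] _ _ _] := CW.
  have eCj : e (C a j) (g (C a (ordS i))) by rewrite -gCiE g_aut C_adj eqxx.
  have [j' ->] := cycle_decomposition_adj CW (gW _ (C_in (ordS i))) eCj.
  exact: imset_f.
apply/eqP; rewrite eqEcard card_imset ?leqnn ?andbT; last exact: perm_inj.
by apply/subsetP => _ /imsetP[_ /imsetP[i _ ->] ->]; apply: gC.
Qed.

End CycleDecompositions.

Section AdjacencyEigenvectors.
Variables (T : finType) (e : rel T).
Local Open Scope ring_scope.
Local Notation eigen1 w := (vecof w <= eigenspace (adjmx e) 1)%MS.

Lemma eigen1P (w : T -> algC) :
  reflect (forall y, \sum_x w x * (e x y)%:R = w y) (eigen1 w).
Proof.
have colE y : (vecof w *m adjmx e) 0 (enum_rank y) = \sum_x w x * (e x y)%:R.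
  rewrite !mxE (big_enum_val (fun x => w x * (e x y)%:R)) /=.
  by apply: eq_bigr => j _; rewrite !mxE enum_rankK.
apply: (iffP eigenspaceP); rewrite scale1r.
  by move=> /rowP wA y; rewrite -colE wA mxE enum_rankK.
by move=> wA; apply/rowP => i; rewrite -[i]enum_valK colE wA mxE enum_valK.
Qed.

Lemma eigen1_aut (w : T -> algC) (g : {perm T}) :
  is_aut e g -> eigen1 w -> eigen1 (fun x => w (g x)).
Proof.
move=> g_aut /eigen1P wA; apply/eigen1P => y.
rewrite -wA [RHS](reindex_inj (@perm_inj _ g)) /=.
by apply: eq_bigr => x _; rewrite g_aut.
Qed.

Lemma eigen1_restrict (w : T -> algC) (O : {set T}) :
  symmetric e -> (forall x y, x \in O -> e x y -> y \in O) ->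
  eigen1 w -> eigen1 (fun x => if x \in O then w x else 0).
Proof.
move=> e_sym O_closed /eigen1P wA; apply/eigen1P => y.
case: ifPn => [yO | yNO].
  rewrite -wA; apply: eq_bigr => x _; case: ifPn => // xNO.
  case exy: (e x y); last by rewrite !mulr0.
  by rewrite e_sym in exy; rewrite (O_closed _ _ yO exy) in xNO.
apply: big1 => x _; case: ifPn => [xO | _]; last by rewrite mul0r.
case exy: (e x y); last by rewrite mulr0.
by rewrite (O_closed _ _ xO exy) in yNO.
Qed.

Hypothesis simple1 : \rank (eigenspace (adjmx e) 1) = 1%N.

Lemma simple_eigen1_proportional (u v : T -> algC) (x0 : T) :
  eigen1 u -> eigen1 v -> u x0 != 0 -> exists c, forall x, v x = c * u x.
Proof.
move=> eig_u eig_v ux0_neq0.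
have u_neq0 : vecof u != 0.
  by apply: contraNneq ux0_neq0 => /rowP /(_ (enum_rank x0)); rewrite !mxE enum_rankK => ->.
have eig_le_u : (eigenspace (adjmx e) 1 <= vecof u)%MS.
  by rewrite -(mxrank_leqif_sup eig_u).2 simple1 rank_rV u_neq0.
have /sub_rVP[c /rowP vE] := submx_trans eig_v eig_le_u.
by exists c => x; move: (vE (enum_rank x)); rewrite !mxE enum_rankK.
Qed.

Lemma simple_eigen1_aut_fix (z : T -> algC) (g : {perm T}) (x0 : T) :
  eigen1 z -> is_aut e g -> g x0 = x0 -> z x0 != 0 -> forall x, z (g x) = z x.
Proof.
move=> eig_z g_aut gx0 zx0_neq0.
have [c zgE] := simple_eigen1_proportional eig_z (eigen1_aut g_aut eig_z) zx0_neq0.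
have c1 : c = 1 by apply: (mulIf zx0_neq0); rewrite -zgE gx0 mul1r.
by move=> x; rewrite zgE c1 mul1r.
Qed.

Lemma simple_eigen1_closed_full (z : T -> algC) (O : {set T}) (x0 : T) :
  symmetric e -> eigen1 z -> (forall x, z x != 0) -> x0 \in O ->
  (forall x y, x \in O -> e x y -> y \in O) -> O = [set: T].
Proof.
move=> e_sym eig_z z_neq0 x0O O_closed.
have [c zOE] := simple_eigen1_proportional eig_z
  (eigen1_restrict e_sym O_closed eig_z) (z_neq0 x0).
have c1 : c = 1 by apply: (mulIf (z_neq0 x0)); rewrite -zOE x0O mul1r.
apply/setP => x; rewrite inE; apply: contraT => xNO.
by have := z_neq0 x; rewrite -[z x]mul1r -c1 -zOE (negbTE xNO) eqxx.
Qed.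

End AdjacencyEigenvectors.

Section RegularActions.
Variable T : finType.
Implicit Types (G : {group {perm T}}) (g h s : {perm T}).
Local Open Scope group_scope.

Lemma acts_regularly_of_free_at G (x0 : T) :
  [transitive G, on [set: T] | 'P] ->
  (forall g, g \in G -> g x0 = x0 -> g = 1) -> acts_regularly G [set: T].
Proof.
move=> G_trans free_x0; split=> // g x gG _ gx.
have /orbitP[h hG hx0] : x \in orbit 'P G x0 by rewrite (atransP G_trans) ?inE.
apply/eqP; rewrite -(conjg_eq1 g h^-1); apply/eqP/free_x0; first by rewrite groupJ ?groupV.
by rewrite /= apermE in hx0; rewrite conjgE invgK !permM hx0 gx -hx0 permK.
Qed.

Lemma acts_regularly_inj G g h (x0 : T) :
  acts_regularly G [set: T] -> g \in G -> h \in G -> g x0 = h x0 -> g = h.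
Proof.
case=> _ G_free gG hG ghx0; apply/eqP; rewrite eq_mulgV1; apply/eqP.
by apply: (G_free _ x0); rewrite ?groupM ?groupV ?inE // permM ghx0 permK.
Qed.

Lemma acts_regularly_subgroup G (H : {group {perm T}}) :
  H \subset G -> acts_regularly G [set: T] -> [transitive H, on [set: T] | 'P] ->
  acts_regularly H [set: T].
Proof. by move=> sHG [_ G_free] H_trans; split=> // g x /(subsetP sHG); apply: G_free. Qed.

Lemma orbit_adj_closed (e : rel T) G (x0 : T) :
  (forall g, g \in G -> is_aut e g) ->
  (forall y, e x0 y -> exists2 s, s \in G & y = s x0) ->
  forall x y, x \in orbit 'P G x0 -> e x y -> y \in orbit 'P G x0.
Proof.
move=> G_aut x0_nbrs _ y /orbitP[h hG <-]; rewrite /= apermE => ehy.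
have /x0_nbrs[s sG syE] : e x0 (h^-1 y) by rewrite -(G_aut h hG) permKV.
by apply/orbitP; exists (s * h); rewrite ?groupM //= apermE permM -syE permKV.
Qed.

Lemma cayley_graph_of_regular (e : rel T) G :
  simple_graph e -> (forall g, g \in G -> is_aut e g) ->
  acts_regularly G [set: T] -> cayley_graph_of G e.
Proof.
move=> [e_sym e_irr] G_aut G_reg; have [G_trans _] := G_reg.
have /imsetP[x0 _ _] := G_trans.
pose S := [set s in G | e x0 (s x0)].
(* [g * h] applies [g] first, so [g |-> g x0] reverses products; hence [g^-1]. *)
have S_inv s : s \in G -> e x0 (s^-1 x0) = e x0 (s x0).
  by move=> sG; rewrite -(G_aut s sG) permKV e_sym.
exists (fun g => g^-1 x0), S; split.
- move=> g h gG hG /= ghx0; apply: invg_inj.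
  by apply: (acts_regularly_inj G_reg) ghx0; rewrite groupV.
- apply/setP => x; rewrite inE.
  have /orbitP[h hG <-] : x \in orbit 'P G x0 by rewrite (atransP G_trans) ?inE.
  by apply/imsetP; exists h^-1; rewrite ?groupV ?invgK.
- split.
  + by apply/subsetP => s; rewrite inE => /andP[].
  + by rewrite inE perm1 e_irr andbF.
  apply/setP => s; apply/imsetP/idP => [[t] | sS].
    by rewrite !inE => /andP[tG etx0] ->; rewrite groupV tG S_inv.
  by exists s^-1; rewrite ?invgK // !inE groupV S_inv; case/setIdP: sS => ->.
- move=> g h gG hG /=.
  rewrite -(G_aut g gG) permKV -permM -[g^-1 * h]invgK invMg invgK !inE.
by rewrite groupV groupM ?groupV // S_inv ?groupM ?groupV.
Qed.

End RegularActions.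

Section CubicGraphWithSimpleEigenvalueOne.
Local Open Scope ring_scope.
Variables (T : finType) (e : rel T).
Hypotheses (e_simple : simple_graph e) (e_cubic : cubic e).
Hypothesis simple1 : \rank (eigenspace (adjmx e) 1) = 1%N.
Variable z : T -> algC.
Hypothesis z_pm : forall x, z x = 1 \/ z x = -1.
Hypothesis z_eigen : (vecof z <= eigenspace (adjmx e) 1)%MS.
Local Notation Vplus := [set x | z x == 1].
Local Notation Vminus := [set x | z x == -1].
Variables (m k : nat) (C D : 'I_m -> 'I_k -> T).
Hypotheses (decC : cycle_decomposition e Vplus C) (decD : cycle_decomposition e Vminus D).
Variable Gamma : {group {perm T}}.
Hypothesis Gamma_aut : forall g, g \in Gamma -> is_aut e g.
Hypothesis Gamma_trans : [transitive Gamma, on [set: T] | 'P].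
Variables (a1 b1 : 'I_m) (i1 : 'I_k).
Local Notation C1 := [set C a1 i | i : 'I_k].
Hypothesis stab_C1_regular : acts_regularly [set g in Gamma | g @: C1 == C1] C1.
Local Notation v1 := (C a1 i1).
Local Notation w1 := (D b1 i1).
Hypothesis v1w1 : e v1 w1.
Variables gamma1 delta1 : {perm T}.
Hypotheses (gamma1_in : gamma1 \in Gamma) (gamma1_C : forall j, gamma1 (C a1 j) = C a1 (ordS j)).
Hypotheses (delta1_in : delta1 \in Gamma) (delta1_C : forall j, delta1 (C a1 j) = D b1 j).
Local Notation H := <<[set gamma1; delta1]>>%G.

Lemma z_neq0 x : z x != 0.
Proof. by case: (z_pm x) => ->; rewrite ?oppr_eq0 oner_eq0. Qed.

Lemma C_cycle a : induced_cycle e Vplus (C a).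
Proof. by case: decC. Qed.

Lemma D_cycle b : induced_cycle e Vminus (D b).
Proof. by case: decD. Qed.

Lemma oneC_neqN1 : (1 : algC) != -1.
Proof. by rewrite -addr_eq0 -mulr2n pnatr_eq0. Qed.

Lemma C_notin_Vminus a i : C a i \notin Vminus.
Proof.
have [_ _ /(_ i) + _] := C_cycle a; rewrite !inE => /eqP->; exact: oneC_neqN1.
Qed.

Lemma D_notin_Vplus b j : D b j \notin Vplus.
Proof.
have [_ _ /(_ j) + _] := D_cycle b; rewrite !inE => /eqP->; rewrite eq_sym; exact: oneC_neqN1.
Qed.

Lemma C_neq_D a b i j : C a i != D b j.
Proof.
apply: contraNneq (C_notin_Vminus a i) => ->.
by have [_ _ -> _] := D_cycle b.
Qed.

Lemma Gamma_fix_C1_eq1 g i0 : g \in Gamma -> g (C a1 i0) = C a1 i0 -> g = 1%g.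
Proof.
move=> gG gfix.
have zg := simple_eigen1_aut_fix simple1 z_eigen (Gamma_aut gG) gfix (z_neq0 _).
have gVplus : {in Vplus, forall x, g x \in Vplus} by move=> x; rewrite !inE zg.
have g_stab : g @: C1 = C1.
  by apply: (aut_imset_cycle (i0 := i0) decC (Gamma_aut gG) gVplus); rewrite gfix imset_f.
by apply: stab_C1_regular.2 (C a1 i0) _ _ gfix; rewrite ?inE ?gG ?g_stab ?eqxx ?imset_f.
Qed.

Lemma Gamma_regular : acts_regularly Gamma [set: T].
Proof. exact: (acts_regularly_of_free_at Gamma_trans (fun g => @Gamma_fix_C1_eq1 g i1)). Qed.

Lemma delta1_w1 : delta1 w1 = v1.
Proof.
have e_w1 : e w1 (delta1 w1) by rewrite -{1}(delta1_C i1) Gamma_aut.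
have w1v1 : e w1 v1 by rewrite e_simple.1.
have := induced_cycle_neighbors e_cubic (D_cycle b1) (C_notin_Vminus a1 i1) w1v1 e_w1.
have delta1_neq j : delta1 w1 != D b1 j.
  by rewrite -(delta1_C j) -(delta1_C i1) (inj_eq perm_inj) (delta1_C i1) eq_sym C_neq_D.
by rewrite !(negbTE (delta1_neq _)) => /eqP.
Qed.

Lemma delta1_involution : (delta1 ^+ 2 = 1 /\ delta1 != 1)%g.
Proof.
split.
  by apply: (@Gamma_fix_C1_eq1 _ i1); rewrite ?groupX // expgS expg1 permM delta1_C delta1_w1.
by apply/eqP => d1E; have := C_neq_D a1 b1 i1 i1; rewrite -(delta1_C i1) d1E perm1 eqxx.
Qed.

Lemma H_sub_Gamma : H \subset Gamma.
Proof. by rewrite gen_subG; apply/subsetP => s; rewrite !inE => /orP[] /eqP->. Qed.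

Lemma H_aut g : g \in H -> is_aut e g.
Proof. by move/(subsetP H_sub_Gamma); apply: Gamma_aut. Qed.

Lemma v1_neighbors y : e v1 y -> exists2 s, s \in H & y = s v1.
Proof.
have gamma1_H : gamma1 \in H by rewrite mem_gen // !inE eqxx.
have delta1_H : delta1 \in H by rewrite mem_gen // !inE eqxx orbT.
move=> /(induced_cycle_neighbors e_cubic (C_cycle a1) (D_notin_Vplus b1 i1) v1w1).
case/or3P=> /eqP->.
- by exists gamma1; rewrite ?gamma1_C.
- by exists gamma1^-1%g; rewrite ?groupV // -{2}(ord_predK i1) -gamma1_C permK.
- by exists delta1; rewrite ?delta1_C.
Qed.

Lemma H_regular : acts_regularly H [set: T].
Proof.
apply: (acts_regularly_subgroup H_sub_Gamma Gamma_regular).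
have <- : orbit 'P H v1 = [set: T].
  apply: (simple_eigen1_closed_full simple1 e_simple.1 z_eigen z_neq0 (orbit_refl _ _ _)).
  exact: (orbit_adj_closed H_aut v1_neighbors).
exact: atrans_orbit.
Qed.

End CubicGraphWithSimpleEigenvalueOne.

Theorem theorem5p1 (T : finType) (e : rel T)
  (Hsimple : simple_graph e) (Hcubic : cubic e) (Hvt : vertex_transitive e)
  (Hsimp1 : \rank (eigenspace (adjmx e) 1%R) = 1%N)
  (z : T -> algC) (Hzpm : forall x, z x = 1%R \/ z x = (-1)%R)
  (Hz : (vecof z <= eigenspace (adjmx e) 1%R)%MS)
  (m k : nat) (C D : 'I_m -> 'I_k -> T)
  (HC : cycle_decomposition e [set x | z x == 1%R] C)
  (HD : cycle_decomposition e [set x | z x == (-1)%R] D)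
  (Gamma : {group {perm T}})
  (HGaut : forall g, g \in Gamma -> is_aut e g)
  (HGtr : [transitive Gamma, on [set: T] | 'P])
  (a1 b1 : 'I_m) (i1 : 'I_k)
  (HA1 : acts_regularly
     [set g in Gamma | g @: [set C a1 i | i : 'I_k] == [set C a1 i | i : 'I_k]]
                        [set C a1 i | i : 'I_k])
  (Hv1w1 : e (C a1 i1) (D b1 i1))
  (gamma1 delta1 : {perm T})
  (Hg1 : gamma1 \in Gamma) (Hg1v : forall j, gamma1 (C a1 j) = C a1 (ordS j))
  (Hd1 : delta1 \in Gamma) (Hd1v : forall j, delta1 (C a1 j) = D b1 j) :
  acts_regularly Gamma [set: T] /\
  (delta1 ^+ 2 = 1 /\ delta1 != 1)%g /\
  cayley_graph_of <<[set gamma1; delta1]>>%g e.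
Proof.
have Gamma_reg := Gamma_regular Hsimp1 Hzpm Hz HC HGaut HGtr i1 HA1.
have delta1_inv := delta1_involution Hsimple Hcubic Hsimp1 Hzpm Hz HC HD HGaut HA1
  Hv1w1 Hd1 Hd1v.
have H_reg := H_regular Hsimple Hcubic Hsimp1 Hzpm Hz HC HD HGaut HGtr HA1 Hv1w1
  Hg1 Hg1v Hd1 Hd1v.
split; first exact: Gamma_reg.
split; first exact: delta1_inv.
exact: cayley_graph_of_regular Hsimple (H_aut HGaut Hg1 Hd1) H_reg.
Qed.
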